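(* There exists a Lindelöf basically disconnected Hausdorff topological group which is not a $P$-space if and only if there exists a nondiscrete Lindelöf Boolean basically disconnected Hausdorff topological group of countable pseudocharacter.
   Context: All spaces are Tychonoff. A space is basically disconnected if the closure of every cozero set in it is open. A space is a $P$-space if every $G_\delta$-subset is open. For a topological group, countable pseudocharacter means the identity element is a $G_\delta$-set. A group is Boolean if every element has order at most $2$. *)

From HB Require Import structures.
From mathcomp Require Import all_boot all_order all_algebra.
From mathcomp Require Import all_classical all_reals all_analysis.
From mathcomp Require Import Rstruct Rstruct_topology.
Set Implicit Arguments. Unset Strict Implicit. Unset Printing Implicit Defensive.
Import Order.TTheory GRing.Theory Num.Theory.
Local Open Scope classical_set_scope.

Record topGroup (T : topologicalType) := TopGroup {
  tg_mul : T -> T -> T;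
  tg_inv : T -> T;
  tg_one : T;
  tg_mulA : forall x y z, tg_mul x (tg_mul y z) = tg_mul (tg_mul x y) z;
  tg_mul1g : forall x, tg_mul tg_one x = x;
  tg_mulg1 : forall x, tg_mul x tg_one = x;
  tg_mulVg : forall x, tg_mul (tg_inv x) x = tg_one;
  tg_mulgV : forall x, tg_mul x (tg_inv x) = tg_one;
  tg_mul_cont : continuous (fun p : T * T => tg_mul p.1 p.2);
  tg_inv_cont : continuous tg_inv }.

Definition lindelof (T : topologicalType) : Prop :=
  forall C : set (set T), (forall U, C U -> open U) ->
    \bigcup_(U in C) U = setT ->
    exists D : set (set T), [/\ D `<=` C, countable D & \bigcup_(U in D) U = setT].

Definition cozero (T : topologicalType) (f : T -> Rdefinitions.R) : set T := [set x | f x != 0%R].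

Definition basically_disconnected (T : topologicalType) : Prop :=
  forall f : T -> Rdefinitions.R, continuous f -> open (closure (cozero f)).

Definition Gdelta (T : topologicalType) (A : set T) : Prop :=
  exists U : nat -> set T, (forall n, open (U n)) /\ A = \bigcap_n U n.

Definition P_space (T : topologicalType) : Prop :=
  forall A : set T, Gdelta A -> open A.

Definition discrete_top (T : topologicalType) : Prop := forall A : set T, open A.

Definition boolean_group (T : topologicalType) (G : topGroup T) : Prop :=
  forall x : T, tg_mul G x x = tg_one G.

Definition countable_pseudocharacter (T : topologicalType) (G : topGroup T) : Prop :=
  Gdelta [set tg_one G].

(* A countable pseudocharacter makes [{1}] a G_delta set, which
   is open only in a discrete group; this gives one direction.  Conversely, in
   a Lindelof basically disconnected group that is not a P-space, a non-open
   G_delta set yields, after translation and refinement (Lindelof groups are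
   omega-balanced), a chain of symmetric neighbourhoods [V_n.+1 * V_n.+1 <= V_n]
   stable under conjugation whose intersection [N] is a non-open normal
   subgroup.  The quotient [G/N] is Hausdorff, Lindelof, basically disconnected,
   nondiscrete and of countable pseudocharacter.  In such a group the elements
   with [x * x = 1] form a neighbourhood of [1] (Frolik): their complement is an
   F_sigma covered by countably many clopen sets [D] with [D] disjoint from
   [D^-1], and the closure of a cozero set built from them is a clopen set
   containing none of its inverses, hence missing [1].  A symmetric
   neighbourhood [V] with [V * V] inside that set consists of commuting
   involutions, so it generates an open Boolean subgroup, which inherits every
   other property. *)

From HB Require Import structures.
From mathcomp Require Import all_boot all_order all_algebra.
From mathcomp Require Import all_classical all_reals all_analysis.
From mathcomp Require Import Rstruct Rstruct_topology.
Unset Printing Implicit Defensive.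
Import Order.TTheory GRing.Theory Num.Theory.
Local Open Scope classical_set_scope.
Local Notation R := Rdefinitions.R.

Section TopGroupTheory.
Context {T : topologicalType} (G : topGroup T).
Local Notation mul := (tg_mul G).
Local Notation inv := (tg_inv G).
Local Notation one := (tg_one G).

Lemma mulKg x y : mul (inv x) (mul x y) = y.
Proof. by rewrite tg_mulA tg_mulVg tg_mul1g. Qed.

Lemma mulVKg x y : mul x (mul (inv x) y) = y.
Proof. by rewrite tg_mulA tg_mulgV tg_mul1g. Qed.

Lemma mulgK x y : mul (mul y x) (inv x) = y.
Proof. by rewrite -tg_mulA tg_mulgV tg_mulg1. Qed.

Lemma mulgVK x y : mul (mul y (inv x)) x = y.
Proof. by rewrite -tg_mulA tg_mulVg tg_mulg1. Qed.

Lemma mulg_injl a : injective (mul a).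
Proof. by move=> x y axy; rewrite -(mulKg a x) axy mulKg. Qed.

Lemma mulg_eq1_inv x y : mul x y = one -> y = inv x.
Proof. by move=> xy1; apply: (@mulg_injl x); rewrite xy1 tg_mulgV. Qed.

Lemma invgK x : inv (inv x) = x.
Proof. by apply: (@mulg_injl (inv x)); rewrite tg_mulgV tg_mulVg. Qed.

Lemma invg1 : inv one = one.
Proof. by rewrite -(@mulg_eq1_inv one one) // tg_mulg1. Qed.

Lemma invMg x y : inv (mul x y) = mul (inv y) (inv x).
Proof.
by rewrite -(@mulg_eq1_inv (mul x y) (mul (inv y) (inv x))) // -tg_mulA mulVKg tg_mulgV.
Qed.

Lemma continuous_mulg (X : topologicalType) (f g : X -> T) :
  continuous f -> continuous g -> continuous (fun x => mul (f x) (g x)).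
Proof.
move=> cf cg x; apply: (@continuous2_cvg _ _ _ _ _ _ f g mul); [| exact: cf | exact: cg].
exact: tg_mul_cont (f x, g x).
Qed.

Lemma lmulg_continuous a : continuous (mul a).
Proof. by apply: continuous_mulg => //; [exact: cst_continuous | move=> x]. Qed.

Lemma rmulg_continuous a : continuous (fun x => mul x a).
Proof. by apply: continuous_mulg => //; [move=> x | exact: cst_continuous]. Qed.

Lemma open_invg (A : set T) : open A -> open (inv @^-1` A).
Proof. exact: (continuousP _).1 (@tg_inv_cont _ G) A. Qed.

Lemma closed_invg (A : set T) : closed A -> closed (inv @^-1` A).
Proof. exact: (continuous_closedP _).1 (@tg_inv_cont _ G) A. Qed.

Lemma nbhs_translate a (A : set T) :
  nbhs a A <-> nbhs one (fun x => A (mul a x)).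
Proof.
split => [nA|nA1].
  have c := lmulg_continuous a one; rewrite /continuous_at tg_mulg1 in c.
  exact: c _ nA.
have c := lmulg_continuous (inv a) a; rewrite /continuous_at tg_mulVg in c.
have nA : nbhs a [set y | A (mul a (mul (inv a) y))] := c _ nA1.
by apply: filterS nA => y /=; rewrite mulVKg.
Qed.

Lemma sym_nbhs_mul_sub (W : set T) : nbhs one W ->
  exists V : set T, [/\ open_nbhs one V, (forall x, V x -> V (inv x)),
    (forall x y, V x -> V y -> W (mul x y)) & V `<=` W].
Proof.
move=> nW; have := @tg_mul_cont _ G (one, one).
rewrite /continuous_at /= tg_mulg1 => /(_ W nW) [[A B] /= [nA nB] sAB].
have : nbhs one (A `&` B) by exact: filterI.
rewrite nbhsE => -[Ob [oOb Ob1] sOb].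
pose V := Ob `&` inv @^-1` Ob.
have VW x y : V x -> V y -> W (mul x y).
  by move=> [/sOb[Ax _] _] [/sOb[_ By] _]; exact: (sAB (x, y)).
exists V; split => //.
- split; last by split => //=; rewrite invg1.
  by apply: openI => //; exact: open_invg.
- by move=> x [Ox Oix]; split => //=; rewrite invgK.
- move=> x Vx; rewrite -(tg_mulg1 G x); apply: VW => //.
  by split => //=; rewrite invg1.
Qed.

Lemma open_set1_discrete : open [set one] -> discrete_top T.
Proof.
move=> o1 A; rewrite openE => a Aa; rewrite /interior nbhs_translate.
by apply: filterS (open_nbhs_nbhs (conj o1 erefl)) => x /= ->; rewrite tg_mulg1.
Qed.

End TopGroupTheory.

Lemma Gdelta_set1_not_P_space {T : topologicalType} (G : topGroup T) :
  countable_pseudocharacter G -> ~ discrete_top T -> ~ P_space T.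
Proof. by move=> cp nd P; apply/nd/(open_set1_discrete G)/P. Qed.

Section LindelofCover.
Context {T : topologicalType}.
Hypothesis li : lindelof T.

Lemma lindelof_closed_subcover (E : set T) (W : T -> set T) :
  closed E -> (forall x, E x -> open_nbhs x (W x)) ->
  exists D : set (set T),
    [/\ D `<=` W @` E, countable D & E `<=` \bigcup_(U in D) U].
Proof.
move=> cE oW; pose C := W @` E `|` [set ~` E].
have oC U : C U -> open U.
  by move=> [[x Ex <-]|->]; [exact: (oW x Ex).1 | exact: closed_openC].
have covC : \bigcup_(U in C) U = setT.
  apply/seteqP; split => // y _; have [Ey|nEy] := pselect (E y).
    by exists (W y); [left; exists y | exact: (oW y Ey).2].
  by exists (~` E); [right|].
have [D [DC cD covD]] := li C oC covC.
exists (D `&` W @` E); split; first by move=> U [].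
  exact: sub_countable (subset_card_le (@subIsetl _ _ _)) cD.
move=> y Ey; have : setT y by [].
rewrite -covD => -[U DU Uy]; exists U => //; split => //.
by case: (DC U DU) => // UE; move: Uy; rewrite UE.
Qed.

Lemma lindelof_Fsigma_cover (E : nat -> set T) (W : T -> set T) (x0 : T) :
  (forall m, closed (E m)) -> (\bigcup_m E m) x0 ->
  (forall x, (\bigcup_m E m) x -> open_nbhs x (W x)) ->
  exists s : nat -> T,
    (forall n, (\bigcup_m E m) (s n)) /\ \bigcup_m E m `<=` \bigcup_n W (s n).
Proof.
set F := \bigcup_m E m => cE Fx0 oW.
have /choice[D hD] m : exists D : set (set T),
    [/\ D `<=` W @` E m, countable D & E m `<=` \bigcup_(U in D) U].
  by apply: lindelof_closed_subcover => // x Ex; apply: oW; exists m.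
have cD : countable (\bigcup_m D m) by apply: bigcup_countable => // m _; case: (hD m).
have [g gD] : exists g : nat -> set T, set_surj setT (\bigcup_m D m) g.
  exact/pcard_surjP.
have /choice[s hs] n : exists x, F x /\ ((W @` F) (g n) -> W x = g n).
  have [[x Fx Wx]|nWg] := pselect ((W @` F) (g n)).
    by exists x; split => // _; rewrite Wx.
  by exists x0; split => // /nWg.
exists s; split => [n|y [m _ Ey]]; first by case: (hs n).
have [DW _ covD] := hD m; have [U DU Uy] := covD y Ey.
have [n _ gnU] := gD U (ex_intro2 _ _ m I DU).
have [x Emx WxU] := DW U DU.
exists n => //; have [_ ->] := hs n; first by rewrite gnU.
by rewrite gnU -WxU; exists x => //; exists m.
Qed.

End LindelofCover.

Section GroupUniformity.
Local Open Scope relation_scope.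
Context {T : topologicalType} (G : topGroup T).
Local Notation mul := (tg_mul G).
Local Notation inv := (tg_inv G).
Local Notation one := (tg_one G).

Definition group_unif : Type := T.
HB.instance Definition _ := Choice.copy group_unif T.

Definition group_ent : set_system (group_unif * group_unif) :=
  [set E | exists W : set T, nbhs one W /\
     [set pq : T * T | W (mul (inv pq.1) pq.2)] `<=` E].

Lemma group_ent_filter : Filter group_ent.
Proof.
split.
- by exists setT; split => //; exact: filterT.
- move=> P Q [W1 [n1 s1]] [W2 [n2 s2]]; exists (W1 `&` W2).
  by split; [exact: filterI | move=> pq [/s1 ? /s2 ?]].
- by move=> P Q PQ [W [nW sW]]; exists W; split => //; apply: subset_trans PQ.
Qed.

Lemma group_ent_diag A : group_ent A -> diagonal `<=` A.
Proof.
move=> [W [nW sW]] [p q] /= pq; apply: sW => /=.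
by rewrite -[q]pq tg_mulVg; exact: nbhs_singleton.
Qed.

Lemma group_ent_inv A : group_ent A -> group_ent A^-1.
Proof.
move=> [W [nW sW]]; exists (inv @^-1` W); split.
  by have := @tg_inv_cont _ G one; rewrite /continuous_at invg1; exact.
by move=> [p q] /= h; apply: sW => /=; move: h; rewrite invMg invgK.
Qed.

Lemma group_ent_split A : group_ent A -> exists2 B, group_ent B & B \; B `<=` A.
Proof.
move=> [W [nW sW]]; have [V [[oV V1] _ VW _]] := sym_nbhs_mul_sub G _ nW.
exists [set pq : T * T | V (mul (inv pq.1) pq.2)].
  by exists V; split => //; exact: open_nbhs_nbhs.
move=> [p r] [q /= Vpq Vqr]; apply: sW => /=.
by have := VW _ _ Vpq Vqr; rewrite -tg_mulA mulVKg.
Qed.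

HB.instance Definition _ := isUniform.Build group_unif
  group_ent_filter group_ent_diag group_ent_inv group_ent_split.

Lemma group_separator (x : T) (V : set T) : open_nbhs x V ->
  exists f : T -> R, [/\ continuous f, f x = 0%R & forall y, ~ V y -> f y = 1%R].
Proof.
move=> [oV Vx]; have := open_nbhs_nbhs (conj oV Vx); rewrite (nbhs_translate G) => nV.
have : uniform_separator [set x] (~` V).
  exists (Uniform.class group_unif).
  exists [set pq : T * T | (fun z => V (mul x z)) (mul (inv pq.1) pq.2)]; split.
  - by exists (fun z => V (mul x z)); split.
  - by rewrite -subset0 => -[p q] [[/= -> nVq]]; rewrite mulVKg.
  - move=> p U [E [W [nW sW]] sEU]; rewrite (nbhs_translate G).
    apply: filterS nW => z Wz; apply: sEU; apply/mem_set.
    by apply: sW => /=; rewrite mulKg.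
move=> /(@uniform_separatorP _ R) [f [cf _ f0 f1]].
by exists f; split => // [|y nVy]; [apply: f0; exists x | apply: f1; exists y].
Qed.

End GroupUniformity.

Local Open Scope ring_scope.

Lemma basically_disconnected_clopen_nbhs {T : topologicalType} (G : topGroup T)
    (x : T) (V : set T) :
  basically_disconnected T -> open_nbhs x V ->
  exists D : set T, [/\ open_nbhs x D, closed D & D `<=` V].
Proof.
move=> bd xV; have [f [cf f0 f1]] := group_separator G _ _ xV.
pose c : R := 2^-1; have c1 : c < 1 by rewrite invf_lt1 // ltr1n.
pose h : T -> R^o := ((f \min cst c) - cst c).
have ch : continuous h.
  move=> y; apply: continuousB; last exact: cst_continuous.
  by apply: continuous_min; [exact: cf | exact: cst_continuous].
have cozE y : cozero h y <-> f y < c.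
  change (Order.min (f y) c - c != 0 <-> f y < c); rewrite subr_eq0 minEle.
  have [fc|fc] := leP (f y) c; first by rewrite lt_neqAle fc andbT.
  by rewrite eqxx; split => // /(lt_trans fc); rewrite ltxx.
have fc_closed : closed (f @^-1` [set r | r <= c]).
  by apply: preimage_closed; [move=> z _; exact: cf | exact: closed_le].
exists (closure (cozero h)); split => //.
- by split; [exact: bd | apply: subset_closure; apply/cozE; rewrite f0 invr_gt0].
- exact: closed_closure.
- move=> y hy; apply: contrapT => nVy.
  have : (f @^-1` [set r | r <= c]) y.
    rewrite ((closure_id _).1 fc_closed); apply: closureS hy => z /cozE /ltW.
    by [].
  by rewrite /= f1 // leNgt c1.
Qed.

Section SquareRootsOfOne.
Context {T : topologicalType} (G : topGroup T).
Local Notation mul := (tg_mul G).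
Local Notation inv := (tg_inv G).
Local Notation one := (tg_one G).
Hypothesis bd : basically_disconnected T.

Lemma inv_disjoint_clopen_nbhs x : hausdorff_space T -> mul x x != one ->
  exists D : set T, [/\ open_nbhs x D, closed D & forall y, D y -> ~ D (inv y)].
Proof.
move=> hs xx1; have xix : x != inv x.
  by apply: contra xx1 => /eqP {2}->; rewrite tg_mulgV.
move: hs; rewrite open_hausdorff => /(_ _ _ xix) [[A B] /=].
move=> [/set_mem Ax /set_mem Bix] [oA oB /eqP AB0].
have [|D [xD cD DAB]] :=
    basically_disconnected_clopen_nbhs G x (A `&` inv @^-1` B) bd.
  by split; [apply: openI => //; exact: open_invg | split].
exists D; split => // y Dy Diy; have [Ay _] := DAB y Dy.
have [_ /=] := DAB _ Diy; rewrite invgK => By.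
by have : (A `&` B) y by []; rewrite AB0.
Qed.

Section Disjointification.
Variable d : nat -> set T.
Hypotheses (od : forall n, open (d n)) (cd : forall n, closed (d n))
  (dd : forall n y, d n y -> ~ d n (inv y)).

Definition below n := \bigcup_(k in `I_n) (d k `|` inv @^-1` d k).

Definition dsj n := d n `\` below n.

Lemma dsj_open n : open (dsj n).
Proof.
apply: openI (od n) (closed_openC _); apply: closed_bigcup => [|k _].
  exact: finite_II.
exact: closedU (cd k) (closed_invg G _ (cd k)).
Qed.

Lemma dsj_closed n : closed (dsj n).
Proof.
apply: closedI (cd n) (open_closedC _); apply: bigcup_open => k _.
exact: openU (od k) (open_invg G _ (od k)).
Qed.

Lemma dsj_uniq n m y : dsj n y -> dsj m y -> n = m.
Proof.
move=> [dn pn] [dm pm]; have [nm|mn|//] := ltngtP n m.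
  by case: pm; exists n => //; left.
by case: pn; exists m => //; left.
Qed.

Lemma dsj_inv n m y : dsj n y -> ~ dsj m (inv y).
Proof.
move=> [dn pn] [dm pm]; have [nm|mn|nm] := ltngtP n m.
- by apply: pm; exists n => //; right; rewrite /= invgK.
- by apply: pn; exists m => //; right.
- by move: dm; rewrite -nm; exact: dd dn.
Qed.

Lemma dsj_cover n y : d n y \/ d n (inv y) -> exists k, dsj k y \/ dsj k (inv y).
Proof.
elim/ltn_ind: n => n IH dny.
have [[k kn [dky|dkiy]]|ny] := pselect (below n y).
- by apply: IH kn _; left.
- by apply: IH kn _; right.
have [[k kn [dkiy|dky]]|niy] := pselect (below n (inv y)).
- by apply: IH kn _; right.
- by apply: IH kn _; left; rewrite /= invgK in dky.
by exists n; case: dny => h; [left|right].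
Qed.

Definition ladder (y : T) : R :=
  match pselect (exists n, dsj n y) with
  | left h => (projT1 (cid h)).+1%:R^-1
  | right _ => 0
  end.

Lemma ladderE n y : dsj n y -> ladder y = n.+1%:R^-1.
Proof.
move=> dny; rewrite /ladder; case: pselect => [h|]; last by case; exists n.
by case: (cid h) => k /= dky; rewrite (dsj_uniq _ _ _ dky dny).
Qed.

Lemma ladder0 y : ~ (exists n, dsj n y) -> ladder y = 0.
Proof. by rewrite /ladder; case: pselect. Qed.

Lemma ladder_ge0 y : 0 <= ladder y.
Proof. by rewrite /ladder; case: pselect => // h; rewrite invr_ge0. Qed.

Lemma cozero_ladder y : cozero ladder y <-> exists n, dsj n y.
Proof.
split => [|[n dny]]; last by rewrite /cozero /= (ladderE _ _ dny) invr_eq0 pnatr_eq0.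
by apply: contraPP => ndy; rewrite /cozero /= ladder0 // eqxx.
Qed.

Lemma ladder_continuous : continuous ladder.
Proof.
move=> y; have [[n dny]|ndy] := pselect (exists n, dsj n y).
  apply: (cvg_near_cst (ladder y)).
  apply: filterS (open_nbhs_nbhs (conj (dsj_open n) dny)) => z dnz.
  by rewrite (ladderE _ _ dnz) (ladderE _ _ dny).
rewrite /continuous_at (ladder0 _ ndy); apply/(@cvgrPdist_lt _ R^o) => eps eps0.
pose m := Num.trunc eps^-1.
have m_eps : m.+1%:R^-1 < eps by rewrite invf_plt ?posrE //; exact: truncnS_gt.
have : nbhs y (~` \bigcup_(k in `I_m.+1) dsj k).
  apply: open_nbhs_nbhs; split; last by move=> [k _ dky]; apply: ndy; exists k.
  apply: closed_openC; apply: closed_bigcup => [|k _]; first exact: finite_II.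
  exact: dsj_closed.
apply: filterS => z ndz; rewrite sub0r normrN ger0_norm ?ladder_ge0 //.
have [[k dkz]|nk] := pselect (exists k, dsj k z); last by rewrite ladder0.
rewrite (ladderE _ _ dkz); apply: le_lt_trans m_eps.
have mk : (m < k)%N by rewrite ltnNge; apply/negP => km; apply: ndz; exists k.
by rewrite lef_pV2 ?posrE ?ltr0n // ler_nat ltnW.
Qed.

(* The closure of [cozero ladder] is open by basic disconnectedness and,
   like each [dsj n], meets no inverse of itself; so it misses [one]. *)
Lemma nbhs_one_setC_bigcup : nbhs one (~` \bigcup_n d n).
Proof.
pose cl := closure (cozero ladder).
have ocl : open cl by apply: bd; exact: ladder_continuous.
have ncl1 : ~ cl one.
  move=> cl1; have : nbhs one (cl `&` inv @^-1` cl).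
    apply: open_nbhs_nbhs; split; first exact: openI ocl (open_invg G _ ocl).
    by split => //=; rewrite invg1.
  move=> /cl1 [w [/cozero_ladder [n dnw] [_ /= ciw]]].
  have : nbhs (inv w) (inv @^-1` dsj n).
    apply: open_nbhs_nbhs; split; first exact: open_invg G _ (dsj_open n).
    by rewrite /= invgK.
  move=> /ciw [z [/cozero_ladder [k dkz] /= dnz]].
  exact: dsj_inv _ _ _ dkz dnz.
have : nbhs one (~` cl `&` ~` (inv @^-1` cl)).
  apply: open_nbhs_nbhs; split; last by split => //=; rewrite invg1.
  apply: openI; first exact/closed_openC/closed_closure.
  by apply: closed_openC; apply: closed_invg; exact: closed_closure.
apply: filterS => y [ncy nciy] [n _ dny].
have [k [dky|dkiy]] := dsj_cover _ _ (or_introl dny).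
- by apply: ncy; apply: subset_closure; apply/cozero_ladder; exists k.
- by apply: nciy; apply: subset_closure; apply/cozero_ladder; exists k.
Qed.

End Disjointification.

Lemma setC_involutions_Fsigma : countable_pseudocharacter G ->
  exists2 E : nat -> set T,
    forall m, closed (E m) & \bigcup_m E m = ~` [set x | mul x x = one].
Proof.
move=> [On [oOn On1]]; exists (fun m => (fun x => mul x x) @^-1` ~` On m).
  move=> m; apply: (continuous_closedP _).1; last exact/open_closedC.
  by apply: continuous_mulg => x; exact: cvg_id.
apply/seteqP; split => x /=.
  move=> [m _ nOx] xx1; apply: nOx.
  by have : [set one] (mul x x) by []; rewrite On1; apply.
move=> nFx; apply: contrapT => nE; apply: nFx.
suff : (\bigcap_n On n) (mul x x) by rewrite -On1.
by move=> m _; apply: contrapT => nO; apply: nE; exists m.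
Qed.

Lemma squares_one_nbhs : lindelof T -> hausdorff_space T ->
  countable_pseudocharacter G -> nbhs one [set x | mul x x = one].
Proof.
move=> li hs /setC_involutions_Fsigma [E cE EF]; set F := [set x | mul x x = one].
have [[x0 nFx0]|allF] := pselect (exists x, ~ F x); last first.
  suff -> : F = setT by exact: filterT.
  by apply/seteqP; split => // x _; apply: contrapT => ?; apply: allF; exists x.
have /choice[D hD] x : exists D : set T, ~ F x ->
    [/\ open_nbhs x D, closed D & forall y, D y -> ~ D (inv y)].
  have [Fx|/eqP nFx] := pselect (F x); first by exists setT.
  by have [D ?] := inv_disjoint_clopen_nbhs x hs nFx; exists D.
have Ex0 : (\bigcup_m E m) x0 by rewrite EF.
have oD x : (\bigcup_m E m) x -> open_nbhs x (D x) by rewrite EF => /hD [].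
have [s [sE Ecov]] := lindelof_Fsigma_cover li E D x0 cE Ex0 oD.
have hDs n : [/\ open_nbhs (s n) (D (s n)), closed (D (s n))
    & forall y, D (s n) y -> ~ D (s n) (inv y)].
  by apply: hD; have := sE n; rewrite EF.
have od n : open (D (s n)) by case: (hDs n) => -[].
have cd n : closed (D (s n)) by case: (hDs n).
have dd n y : D (s n) y -> ~ D (s n) (inv y) by case: (hDs n) => _ _; exact.
apply: filterS (nbhs_one_setC_bigcup (fun n => D (s n)) od cd dd) => y ndy.
apply: contrapT => nFy; apply: ndy.
by have := Ecov y; rewrite EF => /(_ nFy) [n _ ?]; exists n.
Qed.

End SquareRootsOfOne.

Lemma filter_bigcap_ord {X : Type} (F : set_system X) (E : nat -> set X) n :
  Filter F -> (forall k, F (E k)) -> F (\bigcap_(k < n) E k).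
Proof.
move=> FF FE; rewrite bigcap_mkord.
by elim/big_ind: _ => //; [exact: filterT | exact: filterI].
Qed.

Section NbhsChain.
Context {T : topologicalType} (G : topGroup T).
Local Notation mul := (tg_mul G).
Local Notation inv := (tg_inv G).
Local Notation one := (tg_one G).

(* Countably many translates [s k V] cover the group; [w k] is [V] conjugated
   by [s k]. *)
Lemma lindelof_omega_balanced (U : set T) : lindelof T -> nbhs one U ->
  exists w : nat -> set T, (forall k, nbhs one (w k)) /\
    forall g, exists k, forall x, w k x -> U (mul (mul g x) (inv g)).
Proof.
move=> li nU; have [V1 [V1one _ V1U _]] := sym_nbhs_mul_sub G U nU.
have [V [[oV V0] Vs VV VV1]] := sym_nbhs_mul_sub G V1 (open_nbhs_nbhs V1one).
pose W x := [set y | V (mul (inv x) y)].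
have oW x : (\bigcup_(m : nat) setT) x -> open_nbhs x (W x).
  split; last by rewrite /W /= tg_mulVg.
  exact: (continuousP _).1 (lmulg_continuous G (inv x)) _ oV.
have [s [_ scov]] := lindelof_Fsigma_cover li (fun=> setT) W one (fun=> closedT)
  (ex_intro2 _ _ 0%N I I) oW.
exists (fun k => [set x | V (mul (mul (inv (s k)) x) (s k))]); split.
  move=> k; apply: open_nbhs_nbhs; split; last by rewrite /= tg_mulg1 tg_mulVg.
  apply: (continuousP _).1 oV.
  by apply: continuous_mulg (lmulg_continuous G _) _ => x; exact: cvg_cst.
move=> g; have [k _ Vk] := scov (inv g) (ex_intro2 _ _ 0%N I I).
exists k => x Vx; rewrite /W /= in Vk.
set v := mul (inv (s k)) (inv g) in Vk.
have -> : mul (mul g x) (inv g) = mul (inv v) (mul (mul (mul (inv (s k)) x) (s k)) v).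
  by rewrite /v invMg !invgK !tg_mulA !mulgK.
by apply: V1U; [exact: VV1 (Vs _ Vk) | exact: VV].
Qed.

Record nbhs_chain := NbhsChain {
  chain :> nat -> set T;
  chain_open_nbhs n : open_nbhs one (chain n);
  chain_sym n x : chain n x -> chain n (inv x);
  chain_mul n x y : chain n.+1 x -> chain n.+1 y -> chain n (mul x y);
  chain_conj g n : exists m, forall x, chain m x -> chain n (mul (mul g x) (inv g)) }.

Section Construction.
Variables (shrink : set T -> set T) (balance : set T -> nat -> set T).
Hypothesis shrinkP : forall U, nbhs one U ->
  [/\ open_nbhs one (shrink U), (forall x, shrink U x -> shrink U (inv x)),
      (forall x y, shrink U x -> shrink U y -> U (mul x y)) & shrink U `<=` U].
Hypothesis balanceP : forall U, nbhs one U ->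
  (forall k, nbhs one (balance U k)) /\
  forall g, exists k, forall x, balance U k x -> U (mul (mul g x) (inv g)).
Variable A : nat -> set T.
Hypothesis nA : forall n, nbhs one (A n).

(* Step [m] returns [V_m] together with the intersection, over [j <= m], of
   the balancing families of the [V_j]; [V_m.+1] then lies below their first
   [m.+1] members. *)
Fixpoint chain_state m : set T * (nat -> set T) :=
  if m is m'.+1 then
    let p := chain_state m' in
    let V := shrink (p.1 `&` A m `&` \bigcap_(k < m) p.2 k) in
    (V, fun k => p.2 k `&` balance V k)
  else (shrink (A 0), balance (shrink (A 0))).

Let Vc m := (chain_state m).1.
Let Ec m := (chain_state m).2.
Let Wc m := Vc m `&` A m.+1 `&` \bigcap_(k < m.+1) Ec m k.

Lemma Wc_nbhs_of m : open_nbhs one (Vc m) -> (forall k, nbhs one (Ec m k)) ->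
  nbhs one (Wc m).
Proof.
move=> Vm Em; apply: filterI; last exact: filter_bigcap_ord.
by apply: filterI (nA _); exact: open_nbhs_nbhs.
Qed.

Lemma chain_state_nbhs m : open_nbhs one (Vc m) /\ forall k, nbhs one (Ec m k).
Proof.
elim: m => [|m [Vm Em]].
  have [V0 _ _ _] := shrinkP _ (nA 0).
  by split => // k; exact: (balanceP _ (open_nbhs_nbhs V0)).1.
have [VS _ _ _] := shrinkP _ (Wc_nbhs_of _ Vm Em); split => // k.
by apply: filterI (Em k) _; exact: (balanceP _ (open_nbhs_nbhs VS)).1.
Qed.

Lemma Wc_nbhs m : nbhs one (Wc m).
Proof. by have [] := chain_state_nbhs m; exact: Wc_nbhs_of. Qed.

Lemma Ec_sub m j k : (j <= m)%N -> Ec m k `<=` balance (Vc j) k.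
Proof.
elim: m => [|m IH]; first by rewrite leqn0 => /eqP ->.
rewrite leq_eqVlt => /orP [/eqP ->|jm] x [Ex Bx] //.
exact: IH jm x Ex.
Qed.

Lemma Vc_sym n x : Vc n x -> Vc n (inv x).
Proof.
case: n => [|n]; first by have [_ + _ _] := shrinkP _ (nA 0); exact.
by have [_ + _ _] := shrinkP _ (Wc_nbhs n); exact.
Qed.

Lemma Vc_mul n x y : Vc n.+1 x -> Vc n.+1 y -> Vc n (mul x y).
Proof.
move=> Vx Vy; have [_ _ VVW _] := shrinkP _ (Wc_nbhs n).
by have [[]] := VVW x y Vx Vy.
Qed.

Lemma Vc_sub n : Vc n `<=` A n.
Proof.
case: n => [|n]; first by have [_ _ _] := shrinkP _ (nA 0).
by move=> x Vx; have [_ _ _ /(_ x Vx) [[]]] := shrinkP _ (Wc_nbhs n).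
Qed.

Lemma Vc_conj g n : exists m, forall x, Vc m x -> Vc n (mul (mul g x) (inv g)).
Proof.
have [_ /(_ g) [k gk]] := balanceP _ (open_nbhs_nbhs (chain_state_nbhs n).1).
exists (maxn n k).+1 => x Vx.
have [_ _ _ /(_ x Vx) [_ Ex]] := shrinkP _ (Wc_nbhs (maxn n k)).
apply: gk; apply: (Ec_sub _ _ k (leq_maxl n k)).
by apply: Ex; rewrite /= ltnS leq_maxr.
Qed.

Lemma nbhs_chain_sub_exists : exists S : nbhs_chain, forall n, S n `<=` A n.
Proof.
exists (@NbhsChain Vc (fun n => (chain_state_nbhs n).1) Vc_sym Vc_mul Vc_conj).
exact: Vc_sub.
Qed.

End Construction.

Lemma lindelof_nbhs_chain (A : nat -> set T) : lindelof T ->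
  (forall n, nbhs one (A n)) -> exists S : nbhs_chain, forall n, S n `<=` A n.
Proof.
move=> li nA; have /choice[shrink shrinkP] U : exists V, nbhs one U ->
    [/\ open_nbhs one V, (forall x, V x -> V (inv x)),
        (forall x y, V x -> V y -> U (mul x y)) & V `<=` U].
  have [nU|nU] := pselect (nbhs one U); last by exists set0 => /nU.
  by have [V ?] := sym_nbhs_mul_sub G U nU; exists V.
have /choice[balance balanceP] U : exists w : nat -> set T, nbhs one U ->
    (forall k, nbhs one (w k)) /\
    forall g, exists k, forall x, w k x -> U (mul (mul g x) (inv g)).
  have [nU|nU] := pselect (nbhs one U); last by exists (fun=> set0) => /nU.
  by have [w ?] := lindelof_omega_balanced U li nU; exists w.
exact: nbhs_chain_sub_exists shrinkP balanceP A nA.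
Qed.

End NbhsChain.

Arguments chain_open_nbhs {T G}.
Arguments chain_sym {T G}.
Arguments chain_mul {T G}.
Arguments chain_conj {T G}.

Section ChainKernel.
Context {T : topologicalType} {G : topGroup T} (S : nbhs_chain G).
Local Notation mul := (tg_mul G).
Local Notation inv := (tg_inv G).
Local Notation one := (tg_one G).

Definition chain_kernel (x : T) : Prop := forall n, S n x.

Lemma chain_one n : S n one.
Proof. by case: (chain_open_nbhs S n). Qed.

Lemma chain_decr n x : S n.+1 x -> S n x.
Proof.
by move=> Sx; rewrite -(tg_mulg1 G x); apply: chain_mul => //; exact: chain_one.
Qed.

Lemma chain_kernel_one : chain_kernel one.
Proof. by move=> n; exact: chain_one. Qed.

Lemma chain_kernel_inv {x} : chain_kernel x -> chain_kernel (inv x).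
Proof. by move=> Nx n; apply: chain_sym. Qed.

Lemma chain_kernel_mul {x y} :
  chain_kernel x -> chain_kernel y -> chain_kernel (mul x y).
Proof. by move=> Nx Ny n; apply: chain_mul. Qed.

Lemma chain_kernel_conj g {x} : chain_kernel x -> chain_kernel (mul (mul g x) (inv g)).
Proof. by move=> Nx n; have [m gm] := chain_conj S g n; apply: gm. Qed.

Definition chain_rel : rel T := fun x y => `[< chain_kernel (mul (inv x) y) >].

Lemma chain_rel_refl : reflexive chain_rel.
Proof. by move=> x; apply/asboolP; rewrite tg_mulVg; exact: chain_kernel_one. Qed.

Lemma chain_rel_sym : symmetric chain_rel.
Proof.
by move=> x y; apply/asboolP/asboolP => /chain_kernel_inv; rewrite invMg invgK.
Qed.

Lemma chain_rel_trans : transitive chain_rel.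
Proof.
move=> y x z /asboolP Nxy /asboolP Nyz; apply/asboolP.
by have := chain_kernel_mul Nxy Nyz; rewrite -tg_mulA mulVKg.
Qed.

Definition chain_equiv : equiv_rel T :=
  EquivRel chain_rel chain_rel_refl chain_rel_sym chain_rel_trans.

End ChainKernel.

Local Open Scope quotient_scope.

Definition chain_cosets {T : topologicalType} {G : topGroup T} (S : nbhs_chain G) :=
  {eq_quot (chain_equiv S)}.
Definition chain_quotient {T : topologicalType} {G : topGroup T} (S : nbhs_chain G) :=
  quotient_topology (chain_cosets S).

Section ChainQuotient.
Context {T : topologicalType} {G : topGroup T} (S : nbhs_chain G).
Local Notation mul := (tg_mul G).
Local Notation inv := (tg_inv G).
Local Notation one := (tg_one G).
Local Notation N := (chain_kernel S).
Local Notation Q := (chain_quotient S).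

Definition coset : T -> Q := \pi_Q.

Lemma cosetK (a : Q) : coset (repr a) = a.
Proof. exact: reprK. Qed.

Lemma eq_coset x y : coset x = coset y <-> N (mul (inv x) y).
Proof.
split => [xy|Nxy].
  by have /eqmodP/asboolP : x = y %[mod_eq (chain_equiv S)] := xy.
by have : x = y %[mod_eq (chain_equiv S)] by apply/eqmodP/asboolP.
Qed.

Definition quot_mul (a b : Q) : Q := coset (mul (repr a) (repr b)).
Definition quot_inv (a : Q) : Q := coset (inv (repr a)).

Lemma coset_mul_compat x x' y y' :
  coset x = coset x' -> coset y = coset y' -> coset (mul x y) = coset (mul x' y').
Proof.
move=> /eq_coset Nx /eq_coset Ny; apply/eq_coset.
have -> : mul (inv (mul x y)) (mul x' y') =
    mul (mul (mul (inv y) (mul (inv x) x')) y) (mul (inv y) y').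
  by rewrite invMg !tg_mulA mulgK.
apply: (chain_kernel_mul S) Ny.
by have := chain_kernel_conj S (inv y) Nx; rewrite invgK.
Qed.

Lemma coset_inv_compat x x' : coset x = coset x' -> coset (inv x) = coset (inv x').
Proof.
move=> /eq_coset Nx; apply/eq_coset; rewrite invgK.
have := chain_kernel_conj S x (chain_kernel_inv S Nx).
by rewrite invMg invgK !tg_mulA mulgK.
Qed.

Lemma quot_mul_coset x y : quot_mul (coset x) (coset y) = coset (mul x y).
Proof. by apply: coset_mul_compat; rewrite cosetK. Qed.

Lemma quot_inv_coset x : quot_inv (coset x) = coset (inv x).
Proof. by apply: coset_inv_compat; rewrite cosetK. Qed.

Lemma quot_mulA a b c : quot_mul a (quot_mul b c) = quot_mul (quot_mul a b) c.
Proof.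
by rewrite -(cosetK a) -(cosetK b) -(cosetK c) !quot_mul_coset tg_mulA.
Qed.

Lemma quot_mul1g a : quot_mul (coset one) a = a.
Proof. by rewrite -(cosetK a) quot_mul_coset tg_mul1g. Qed.

Lemma quot_mulg1 a : quot_mul a (coset one) = a.
Proof. by rewrite -(cosetK a) quot_mul_coset tg_mulg1. Qed.

Lemma quot_mulVg a : quot_mul (quot_inv a) a = coset one.
Proof. by rewrite -(cosetK a) quot_inv_coset quot_mul_coset tg_mulVg. Qed.

Lemma quot_mulgV a : quot_mul a (quot_inv a) = coset one.
Proof. by rewrite -(cosetK a) quot_inv_coset quot_mul_coset tg_mulgV. Qed.

Lemma coset_continuous : continuous coset.
Proof. exact: (@pi_continuous T (chain_cosets S)). Qed.

Lemma coset_preimage_image (A : set T) :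
  coset @^-1` (coset @` A) = \bigcup_(m in N) [set w | A (mul w (inv m))].
Proof.
apply/seteqP; split => w /=.
  move=> [a Aa /eq_coset Naw]; exists (mul (inv a) w) => //.
  by rewrite /= invMg invgK mulVKg.
move=> [m Nm Awm]; exists (mul w (inv m)) => //; apply/eq_coset.
by rewrite invMg invgK mulgVK.
Qed.

Lemma coset_open (A : set T) : open A -> open (coset @` A).
Proof.
move=> oA; have : open (coset @^-1` (coset @` A)); last by [].
rewrite coset_preimage_image; apply: bigcup_open => m _.
exact: (continuousP _).1 (rmulg_continuous G (inv m)) _ oA.
Qed.

Lemma quot_mul_continuous : continuous (fun p : Q * Q => quot_mul p.1 p.2).
Proof.
move=> [a b] W /=; rewrite (@nbhsE Q) => -[W' [oW' W'ab] sW].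
have : nbhs (repr a, repr b) ((fun p : T * T => mul p.1 p.2) @^-1` (coset @^-1` W')).
  apply: (@tg_mul_cont _ G); apply: open_nbhs_nbhs; split => /=.
    exact: (continuousP _).1 coset_continuous _ oW'.
  by rewrite -quot_mul_coset !cosetK.
case=> -[A B] /= [nA nB] sAB; move: nA nB; rewrite !nbhsE.
move=> -[A' [oA' A'a] sA] -[B' [oB' B'b] sB].
change (filter_prod (nbhs a) (nbhs b) ((fun p : Q * Q => quot_mul p.1 p.2) @^-1` W)).
exists (coset @` A', coset @` B').
  split; apply: open_nbhs_nbhs; (split; first exact: coset_open).
  - by exists (repr a) => //; rewrite cosetK.
  - by exists (repr b) => //; rewrite cosetK.
move=> [p q] [/= [x Ax <-] [y By <-]]; apply: sW; rewrite /= quot_mul_coset.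
exact: (sAB (x, y) (conj (sA _ Ax) (sB _ By))).
Qed.

Lemma quot_inv_continuous : continuous quot_inv.
Proof.
apply/quotient_continuous.
have -> : quot_inv \o coset = coset \o inv.
  by apply: funext => x /=; rewrite quot_inv_coset.
move=> x; apply: continuous_comp; [exact: (@tg_inv_cont _ G) | exact: coset_continuous].
Qed.

Definition quot_group : topGroup Q :=
  TopGroup quot_mulA quot_mul1g quot_mulg1 quot_mulVg quot_mulgV
    quot_mul_continuous quot_inv_continuous.

End ChainQuotient.

Section Images.
Context {X Y : topologicalType} (f : X -> Y).
Hypothesis cf : continuous f.

Lemma lindelof_image : f @` setT = setT -> lindelof X -> lindelof Y.
Proof.
move=> fsurj li C oC covC.
have oC' W : ((preimage f) @` C) W -> open W.
  by move=> [U CU <-]; exact: (continuousP _).1 cf _ (oC U CU).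
have covC' : \bigcup_(W in (preimage f) @` C) W = setT.
  apply/seteqP; split => // x _; have : setT (f x) by [].
  by rewrite -covC => -[U CU Ufx]; exists (f @^-1` U) => //; exists U.
have [D' [D'C cD' covD']] := li _ oC' covC'.
exists ((image^~ f) @` D'); split.
- by move=> _ [W /D'C [U CU <-] <-]; rewrite /= image_preimage.
- exact: sub_countable (card_image_le _ _) cD'.
- apply/seteqP; split => // y _; have : setT y by [].
  rewrite -fsurj => -[x _ <-]; have : setT x by []; rewrite -covD' => -[W D'W Wx].
  by exists (f @` W); [exists W | exists x].
Qed.

Hypotheses (fopen : forall A, open A -> open (f @` A))
  (fquot : forall B, open (f @^-1` B) -> open B).

Lemma closure_preimage_open_map (A : set Y) :
  f @^-1` closure A = closure (f @^-1` A).
Proof.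
apply/seteqP; split => x /= cx B.
  rewrite nbhsE => -[B' [oB' B'x] sB].
  have : nbhs (f x) (f @` B') by apply: open_nbhs_nbhs; split; [exact: fopen | exists x].
  by move=> /cx [y [Ay [z B'z fzy]]]; exists z; split; [rewrite /= fzy | exact: sB].
by move=> /cf /cx [z [Afz Bfz]]; exists (f z).
Qed.

Lemma basically_disconnected_open_quotient :
  basically_disconnected X -> basically_disconnected Y.
Proof.
move=> bd g cg; apply: fquot; rewrite closure_preimage_open_map.
by apply: (bd (g \o f)) => x; exact: continuous_comp (cf x) (cg (f x)).
Qed.

End Images.

Section QuotientProperties.
Context {T : topologicalType} {G : topGroup T} (S : nbhs_chain G).
Local Notation mul := (tg_mul G).
Local Notation inv := (tg_inv G).
Local Notation one := (tg_one G).
Local Notation N := (chain_kernel S).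
Local Notation Q := (chain_quotient S).

Lemma coset_surj : coset S @` setT = setT.
Proof. by apply/seteqP; split => // a _; exists (repr a) => //; exact: cosetK. Qed.

Lemma quot_lindelof : lindelof T -> lindelof Q.
Proof. exact: lindelof_image (coset_continuous S) coset_surj. Qed.

Lemma quot_basically_disconnected :
  basically_disconnected T -> basically_disconnected Q.
Proof.
by apply: basically_disconnected_open_quotient (coset_continuous S) (coset_open S) _.
Qed.

Lemma chain_kernelE x : N x <-> coset S x = coset S one.
Proof.
rewrite eq_coset; split => /(chain_kernel_inv S); last by rewrite tg_mulg1 invgK.
by rewrite tg_mulg1.
Qed.

(* Two points with distinct cosets differ outside some [S n]; the
   [S n.+2]-neighbourhoods of their cosets are then disjoint. *)
Lemma quot_hausdorff : hausdorff_space Q.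
Proof.
rewrite open_hausdorff => p q pq; set x := repr p; set y := repr q.
have [n nSn] : exists n, ~ S n (mul (inv x) y).
  apply: contrapT => allS; move/eqP: pq; apply.
  rewrite -(cosetK S p) -(cosetK S q); apply/eq_coset => n.
  by apply: contrapT => nS; apply: allS; exists n.
pose U z := coset S @` [set w | S n.+2 (mul (inv z) w)].
have oU z : open (U z).
  apply: coset_open; apply: (continuousP _).1 (lmulg_continuous G _) _ _.
  exact: (chain_open_nbhs S n.+2).1.
exists (U x, U y); first by split; apply/mem_set; [exists x | exists y];
  rewrite ?cosetK //= tg_mulVg; exact: chain_one.
split; [exact: oU | exact: oU |]; apply/eqP; rewrite -subset0.
move=> w [[z1 Sz1 <-] [z2 Sz2 /esym/eq_coset Nz]].
apply: nSn.
have -> : mul (inv x) y =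
    mul (mul (inv x) z1) (mul (mul (inv z1) z2) (inv (mul (inv y) z2))).
  by rewrite invMg invgK !tg_mulA !mulgK.
apply: chain_mul; first exact: chain_decr.
by apply: chain_mul; [exact: Nz | exact: chain_sym].
Qed.

Lemma quot_countable_pseudocharacter : countable_pseudocharacter (quot_group S).
Proof.
exists (fun n => coset S @` S n); split.
  by move=> n; apply: coset_open; exact: (chain_open_nbhs S n).1.
apply/seteqP; split => a /=.
  by move=> -> n _; exists one => //; exact: chain_one.
move=> Sa; rewrite -(cosetK S a); apply/chain_kernelE => n.
have [v Sv va] := Sa n.+1 I.
have /eq_coset Nv : coset S v = coset S (repr a) by rewrite va cosetK.
by rewrite -(mulVKg G v (repr a)); apply: chain_mul => //; exact: Nv.
Qed.

Lemma quot_discrete_open_kernel : discrete_top Q -> open N.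
Proof.
move=> dQ; have -> : N = coset S @^-1` [set coset S one].
  by apply/seteqP; split => x /chain_kernelE.
exact: (continuousP _).1 (coset_continuous S) _ (dQ _).
Qed.

End QuotientProperties.

Section OpenSubgroup.
Context {K : topologicalType} (H : topGroup K) (B : set K).
Local Notation mul := (tg_mul H).
Local Notation inv := (tg_inv H).
Local Notation one := (tg_one H).
Hypotheses (B1 : B one) (BM : forall x y, B x -> B y -> B (mul x y))
  (BV : forall x, B x -> B (inv x)) (oB : open B).
Local Notation S := (set_type B).

Definition sg_of {x} (Bx : B x) : S := exist _ x (mem_set Bx).
Definition sg_mul (a b : S) : S := sg_of (BM _ _ (set_valP a) (set_valP b)).
Definition sg_inv (a : S) : S := sg_of (BV _ (set_valP a)).
Definition sg_one : S := sg_of B1.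

Lemma sg_mulA a b c : sg_mul a (sg_mul b c) = sg_mul (sg_mul a b) c.
Proof. by apply: val_inj; rewrite /= tg_mulA. Qed.

Lemma sg_mul1g a : sg_mul sg_one a = a.
Proof. by apply: val_inj; rewrite /= tg_mul1g. Qed.

Lemma sg_mulg1 a : sg_mul a sg_one = a.
Proof. by apply: val_inj; rewrite /= tg_mulg1. Qed.

Lemma sg_mulVg a : sg_mul (sg_inv a) a = sg_one.
Proof. by apply: val_inj; rewrite /= tg_mulVg. Qed.

Lemma sg_mulgV a : sg_mul a (sg_inv a) = sg_one.
Proof. by apply: val_inj; rewrite /= tg_mulgV. Qed.

Lemma set_val_continuous : continuous (val : S -> K).
Proof. by have := @initial_continuous _ K (@set_val K B); rewrite set_valE. Qed.

Lemma continuous_sg (X : topologicalType) (f : X -> S) :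
  continuous (fun x => val (f x)) -> continuous f.
Proof.
by move=> cf; apply: (@continuous_comp_initial _ _ _ (@set_val K B)); rewrite set_valE.
Qed.

Lemma sg_mul_continuous : continuous (fun p : S * S => sg_mul p.1 p.2).
Proof.
apply: continuous_sg; apply: continuous_mulg => p; apply: continuous_comp;
  by [exact: cvg_fst | exact: cvg_snd | exact: set_val_continuous].
Qed.

Lemma sg_inv_continuous : continuous sg_inv.
Proof.
apply: continuous_sg => s.
exact: continuous_comp (set_val_continuous s) (@tg_inv_cont _ H _).
Qed.

Definition subgroup_tg : topGroup S :=
  TopGroup sg_mulA sg_mul1g sg_mulg1 sg_mulVg sg_mulgV
    sg_mul_continuous sg_inv_continuous.

Lemma nbhs_set_type (s : S) (W : set S) : nbhs s W ->
  exists A : set K, [/\ open_nbhs (val s) A & forall t : S, A (val t) -> W t].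
Proof.
rewrite nbhsE => -[U [[A oA <-] Us] sUW].
by exists A; split => [|t At]; [split | apply: sUW; rewrite /= set_valE].
Qed.

Lemma open_subgroup_closed : closed B.
Proof.
rewrite -openC openE => x nBx; rewrite /interior (nbhs_translate H).
apply: filterS (open_nbhs_nbhs (conj oB B1)) => z Bz /= Bxz; apply: nBx.
by rewrite -(mulgK H z x); apply: BM => //; exact: BV.
Qed.

Section Extension.
Context {Y : topologicalType} (g : S -> Y) (c : Y).

Definition sg_extend (x : K) : Y :=
  match pselect (B x) with left Bx => g (sg_of Bx) | right _ => c end.

Lemma sg_extend_val s : sg_extend (val s) = g s.
Proof.
rewrite /sg_extend; case: pselect => [Bs|]; last by case; exact: set_valP.
by congr g; apply: val_inj.
Qed.

Lemma sg_extend_continuous : continuous g -> continuous sg_extend.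
Proof.
move=> cg x; have [Bx|nBx] := pselect (B x).
  move=> W; rewrite {1}/sg_extend; case: pselect => // Bx' /(cg _) /nbhs_set_type.
  move=> [A [[oA Ax] sA]].
  apply: filterS (open_nbhs_nbhs (conj (openI oA oB) (conj Ax Bx'))) => y [Ay By].
  by rewrite /= /sg_extend; case: pselect => // By'; exact: (sA (sg_of By')).
apply: (cvg_near_cst (sg_extend x)).
have : open_nbhs x (~` B) by split => //; exact/closed_openC/open_subgroup_closed.
move=> /open_nbhs_nbhs; apply: filterS => y nBy.
by rewrite /sg_extend; case: pselect => // _; case: pselect.
Qed.

End Extension.

Lemma subgroup_lindelof : lindelof K -> lindelof S.
Proof.
have : continuous (sg_extend id sg_one).
  by apply: sg_extend_continuous => s; exact: cvg_id.
move=> /lindelof_image; apply; apply/seteqP; split => // s _.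
by exists (val s) => //; exact: sg_extend_val.
Qed.

Lemma closure_cozero_sg (f : S -> R) : continuous f ->
  closure (cozero f) = val @^-1` closure (cozero (sg_extend f 0)).
Proof.
move=> cf; apply/seteqP; split => s /= cs W.
  move=> /set_val_continuous /cs [t [ft Wt]].
  by exists (val t); split => //; rewrite /cozero /= sg_extend_val.
move=> /nbhs_set_type [A [[oA As] sA]].
have : nbhs (val s) (A `&` B).
  by apply: open_nbhs_nbhs; split; [exact: openI | split => //; exact: set_valP].
move=> /cs [y [fy [Ay By]]]; exists (sg_of By); split; last exact: sA.
by rewrite /cozero /= -(sg_extend_val f 0).
Qed.

Lemma subgroup_basically_disconnected :
  basically_disconnected K -> basically_disconnected S.
Proof.
move=> bd f cf; rewrite closure_cozero_sg //.
apply: (continuousP _).1 set_val_continuous _ _.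
exact/bd/sg_extend_continuous.
Qed.

Lemma set_type_hausdorff : hausdorff_space K -> hausdorff_space S.
Proof.
rewrite !open_hausdorff => hK s t st.
have vst : val s != val t by apply: contra st => /eqP /val_inj ->.
have [[A1 A2] /= [/set_mem A1s /set_mem A2t] [oA1 oA2 /eqP A0]] := hK _ _ vst.
exists (val @^-1` A1, val @^-1` A2) => /=; first by split; apply/mem_set.
split; [exact: (continuousP _).1 set_val_continuous _ oA1
       | exact: (continuousP _).1 set_val_continuous _ oA2 |].
apply/eqP; rewrite -subset0 => z [A1z A2z].
by have : (A1 `&` A2) (val z) by []; rewrite A0.
Qed.

Lemma subgroup_countable_pseudocharacter :
  countable_pseudocharacter H -> countable_pseudocharacter subgroup_tg.
Proof.
move=> [On [oOn On1]]; exists (fun n => val @^-1` On n); split.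
  by move=> n; exact: (continuousP _).1 set_val_continuous _ (oOn n).
apply/seteqP; split => s /=.
  by move=> -> n _; have : [set one] one by []; rewrite On1; apply.
move=> Os; apply: val_inj => /=.
suff : (\bigcap_n On n) (val s) by rewrite -On1.
by move=> n _; exact: Os n I.
Qed.

Lemma subgroup_not_discrete : ~ discrete_top K -> ~ discrete_top S.
Proof.
move=> ndK dS; apply/ndK/(open_set1_discrete H).
have [A oA A1] := dS [set sg_one].
suff -> : [set one] = A `&` B by exact: openI.
apply/seteqP; split => y /=.
  move=> ->; split => //; have : [set sg_one] sg_one by [].
  by rewrite -A1 /= set_valE.
move=> [Ay By]; have : (val @^-1` A) (sg_of By) by [].
by rewrite -set_valE A1 => /(congr1 val).
Qed.

Lemma subgroup_boolean : (forall x, B x -> mul x x = one) -> boolean_group subgroup_tg.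
Proof. by move=> BF s; apply: val_inj => /=; apply: BF; exact: set_valP. Qed.

End OpenSubgroup.

Section GeneratedSubgroup.
Context {K : topologicalType} (H : topGroup K) (V : set K).
Local Notation mul := (tg_mul H).
Local Notation inv := (tg_inv H).
Local Notation one := (tg_one H).
Hypotheses (V1 : V one) (oV : open V)
  (VVF : forall x y, V x -> V y -> mul (mul x y) (mul x y) = one).

Inductive generated : K -> Prop :=
  | generated_one : generated one
  | generated_lmul v x : V v -> generated x -> generated (mul v x).

Lemma V_involution v : V v -> mul v v = one.
Proof. by move=> Vv; have := VVF _ _ Vv V1; rewrite tg_mulg1. Qed.

(* [v w] is an involution like [v] and [w], so [w v = (v w)^-1 = v w]. *)
Lemma V_commute v w : V v -> V w -> mul v w = mul w v.
Proof.
move=> Vv Vw; have iv := mulg_eq1_inv H _ _ (V_involution _ Vv).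
have iw := mulg_eq1_inv H _ _ (V_involution _ Vw).
by have := mulg_eq1_inv H _ _ (VVF _ _ Vv Vw); rewrite invMg -iv -iw.
Qed.

Lemma generated_mul x y : generated x -> generated y -> generated (mul x y).
Proof.
move=> gx gy; elim: gx => [|v x' Vv _ IH]; first by rewrite tg_mul1g.
by rewrite -tg_mulA; exact: generated_lmul.
Qed.

Lemma generated_involution_central x : generated x ->
  mul x x = one /\ forall w, V w -> mul x w = mul w x.
Proof.
elim=> [|v y Vv _ [yy cy]]; first by split => [|w _]; rewrite ?tg_mul1g ?tg_mulg1.
split => [|w Vw].
  rewrite -tg_mulA [mul y (mul v y)]tg_mulA (cy v Vv).
  by rewrite -[mul (mul v y) y]tg_mulA yy tg_mulg1; exact: V_involution.
by rewrite -tg_mulA (cy w Vw) tg_mulA (V_commute _ _ Vv Vw) tg_mulA.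
Qed.

Lemma generated_involution x : generated x -> mul x x = one.
Proof. by move=> /generated_involution_central []. Qed.

Lemma generated_inv x : generated x -> generated (inv x).
Proof. by move=> gx; rewrite -(mulg_eq1_inv H _ _ (generated_involution _ gx)). Qed.

Lemma generated_open : open generated.
Proof.
rewrite openE => x gx; rewrite /interior (nbhs_translate H).
apply: filterS (open_nbhs_nbhs (conj oV V1)) => z Vz; apply: generated_mul => //.
by rewrite -(tg_mulg1 H z); apply: generated_lmul => //; exact: generated_one.
Qed.

End GeneratedSubgroup.

Lemma not_P_space_nbhs_chain {T : topologicalType} (G : topGroup T) :
  lindelof T -> ~ P_space T -> exists S : nbhs_chain G, ~ open (chain_kernel S).
Proof.
move=> li nP; have [A [[An [oAn AE]] nA]] : exists A : set T, Gdelta A /\ ~ open A.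
  apply: contrapT => allA; apply: nP => A GA.
  by apply: contrapT => nA; apply: allA; exists A.
have [a [Aa naA]] : exists a, A a /\ ~ nbhs a A.
  apply: contrapT => allA; apply: nA; rewrite openE => a Aa.
  by apply: contrapT => naA; apply: allA; exists a.
have nAn n : nbhs (tg_one G) [set x | An n (tg_mul G a x)].
  rewrite -nbhs_translate; apply: open_nbhs_nbhs; split => //.
  by move: Aa; rewrite AE; apply.
have [S SA] := lindelof_nbhs_chain G _ li nAn; exists S => oN; apply: naA.
rewrite (nbhs_translate G).
apply: filterS (open_nbhs_nbhs (conj oN (chain_kernel_one S))).
by move=> x Nx; rewrite AE => n _; exact: SA n x (Nx n).
Qed.

Lemma lindelof_not_P_space_quotient {T : topologicalType} (G : topGroup T) :
  [/\ lindelof T, basically_disconnected T, hausdorff_space T & ~ P_space T] ->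
  exists (K : topologicalType) (H : topGroup K),
    [/\ ~ discrete_top K, lindelof K, basically_disconnected K, hausdorff_space K
      & countable_pseudocharacter H].
Proof.
move=> [li bd _ nP]; have [S nN] := not_P_space_nbhs_chain G li nP.
exists (chain_quotient S), (quot_group S); split.
- by move/quot_discrete_open_kernel.
- exact: quot_lindelof.
- exact: quot_basically_disconnected.
- exact: quot_hausdorff.
- exact: quot_countable_pseudocharacter.
Qed.

Lemma boolean_open_subgroup {K : topologicalType} (H : topGroup K) :
  [/\ ~ discrete_top K, lindelof K, basically_disconnected K, hausdorff_space K
    & countable_pseudocharacter H] ->
  exists (T : topologicalType) (G : topGroup T),
    [/\ ~ discrete_top T, lindelof T, boolean_group G,
        basically_disconnected T & hausdorff_space T]
    /\ countable_pseudocharacter G.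
Proof.
move=> [nd li bd hs cp].
have [V [[oV V1] _ VVF _]] := sym_nbhs_mul_sub H _ (squares_one_nbhs H bd li hs cp).
pose B := generated H V; have B1 : B (tg_one H) := generated_one H V.
have BM : forall x y, B x -> B y -> B (tg_mul H x y) := generated_mul H V.
have BV : forall x, B x -> B (tg_inv H x) := generated_inv H V V1 VVF.
have oB : open B := generated_open H V V1 oV.
exists (set_type B), (subgroup_tg H B B1 BM BV); split; [split|].
- exact: subgroup_not_discrete H B B1 oB nd.
- exact: subgroup_lindelof H B B1 BM BV oB li.
- by apply: subgroup_boolean => x; exact: generated_involution.
- exact: subgroup_basically_disconnected H B B1 BM BV oB bd.
- exact: set_type_hausdorff B hs.
- exact: subgroup_countable_pseudocharacter H B B1 BM BV cp.
Qed.

Theorem corollary2 :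
  (exists (T : topologicalType) (G : topGroup T),
      [/\ lindelof T, basically_disconnected T, hausdorff_space T & ~ P_space T])
  <->
  (exists (T : topologicalType) (G : topGroup T),
      [/\ ~ discrete_top T, lindelof T, boolean_group G,
          basically_disconnected T & hausdorff_space T]
      /\ countable_pseudocharacter G).
Proof.
split => [[T [G hG]]|[T [G [[nd li _ bd hs] cp]]]].
  have [K [H hH]] := lindelof_not_P_space_quotient G hG.
  exact: boolean_open_subgroup H hH.
by exists T, G; split => //; exact: Gdelta_set1_not_P_space G cp nd.
Qed.
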